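(* Uniform (vanilla) federation is modular. That is, with $\mu_e>0,\sigma^2>0$ and error $$err_j(C)=\frac{\mu_e}{\sum_{i\in C}n_i}+\sigma^2\cdot\frac{\sum_{i\in C,i\neq j}n_i^2+\left(\sum_{i\in C,i\neq j}n_i\right)^2}{\left(\sum_{i\in C}n_i\right)^2},$$ for every coalition $C$ and players $s,l\in C$ with $n_s\le n_l$ the following hold: (P1) $\frac{err_s(C)}{err_l(C)}\ge1$, with $err_s(C)>err_l(C)$ if $n_s<n_l$; (P2) $\frac{err_s(C)}{err_l(C)}\le\frac{err_s(\{n_s,n_l\})}{err_l(\{n_s,n_l\})}$; (P3) $\frac{\partial}{\partial n_l}\frac{err_s(\{n_s,n_l\})}{err_l(\{n_s,n_l\})}\ge0$; (P4) $\frac{\partial}{\partial n_s}\frac{err_s(\{n_s,n_l\})}{err_l(\{n_s,n_l\})}\le0$; (P5) $\lim_{n_s/n_l\to0}\frac{err_s(\{n_s,n_l\})}{err_l(\{n_s,n_l\})}=\frac{\mu_e/n_l+2\sigma^2}{\mu_e/n_l}$.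
   Context: Players $i$ have sample sizes $n_i>0$; a coalition is a set of players. In the mean-estimation model, $\mu_e$ is the average sampling noise (expected variance of a player's sample distribution) and $\sigma^2$ is the variance of players' true means. Under uniform (vanilla) federation, a coalition uses the sample-weighted average of local mean estimates, giving player $j\in C$ the expected squared error in the claim. $err_s(\{n_s,n_l\})$ denotes the error of player $s$ in the two-player coalition $\{s,l\}$, viewed as a function of $n_s,n_l$ (similarly for $l$). *)

From HB Require Import structures.
From mathcomp Require Import all_boot all_order all_algebra.
From mathcomp Require Import all_classical all_reals all_analysis.
Set Implicit Arguments. Unset Strict Implicit. Unset Printing Implicit Defensive.
Import Order.TTheory GRing.Theory Num.Theory.
Local Open Scope ring_scope.

Definition err (R : realType) (T : finType) (mu sigma2 : R) (n : T -> R)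
    (C : {set T}) (j : T) : R :=
  mu / (\sum_(i in C) n i)
  + sigma2 * ((\sum_(i in C | i != j) n i ^+ 2) + (\sum_(i in C | i != j) n i) ^+ 2)
      / (\sum_(i in C) n i) ^+ 2.

(* Two-player coalition {s, l}: player s is [false] with size ns,
   player l is [true] with size nl. *)
Definition n2 (R : realType) (ns nl : R) : bool -> R :=
  fun b => if b then nl else ns.

Definition err_s2 (R : realType) (mu sigma2 ns nl : R) : R :=
  err mu sigma2 (n2 ns nl) [set: bool] false.
Definition err_l2 (R : realType) (mu sigma2 ns nl : R) : R :=
  err mu sigma2 (n2 ns nl) [set: bool] true.

Definition ratio2 (R : realType) (mu sigma2 ns nl : R) : R :=
  err_s2 mu sigma2 ns nl / err_l2 mu sigma2 ns nl.

(* Let N be the size of the coalition and r, q the sum and the sum of squares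
   of the sizes of its members other than s and l.  Then
   N^2 err_s = mu N + sigma^2 (n_l^2 + q + (n_l + r)^2), and symmetrically
   for l, so err_s - err_l = 2 sigma^2 (n_l - n_s) / N, which gives (P1).
   Cross-multiplying, the two-player ratio minus the coalition ratio has the
   sign of 2 sigma^4 (n_l - n_s) ((n_s + n_l) (q + r^2) + 2 n_s n_l r) >= 0,
   which is (P2).  The two-player ratio is the rational function
   (mu (n_s + n_l) + 2 sigma^2 n_l^2) / (mu (n_s + n_l) + 2 sigma^2 n_s^2):
   in either variable the numerator of its derivative is, up to sign,
   2 sigma^2 mu (n_s + n_l)^2 + 8 sigma^4 c^2 x > 0 (c the fixed size, x the
   variable one), which gives (P3) and (P4), and it is continuous at
   n_s = 0, which gives (P5). *)

From HB Require Import structures.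
From mathcomp Require Import all_boot all_order all_algebra.
From mathcomp Require Import all_classical all_reals all_analysis.
From mathcomp Require Import ring lra.
Set Implicit Arguments.
Unset Strict Implicit.
Unset Printing Implicit Defensive.
Import Order.TTheory GRing.Theory Num.Theory.
Import numFieldNormedType.Exports.
Local Open Scope classical_set_scope.
Local Open Scope ring_scope.

Section RationalFunctionDerivative.
Variable R : realType.

Lemma is_derive_horner_div (p q : {poly R}) (x : R) : q.[x] != 0 ->
  is_derive x 1 (fun y => p.[y] / q.[y])
    ((p^`().[x] * q.[x] - p.[x] * q^`().[x]) / q.[x] ^+ 2).
Proof.
move=> qx0.
have -> : (fun y => p.[y] / q.[y]) = horner p * (fun y => q.[y]^-1) by [].
by apply: is_derive_eq; rewrite /GRing.scale /=; field.
Qed.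

Lemma near_horner_div_derive (f : R -> R) (p q : {poly R}) (x : R) :
  q.[x] != 0 -> (\forall y \near x, p.[y] / q.[y] = f y) ->
  derivable f x 1 /\
  derive1 f x = (p^`().[x] * q.[x] - p.[x] * q^`().[x]) / q.[x] ^+ 2.
Proof.
move=> qx0 near_f.
have df := near_eq_is_derive near_f (is_derive_horner_div p qx0).
by split; [exact: ex_derive | rewrite derive1E derive_val].
Qed.

End RationalFunctionDerivative.

(* [err_split mu sg a b r q] is the error of a player of size [a] in a
   coalition made of a second player of size [b] and further players whose
   sizes have sum [r] and sum of squares [q]. *)
Definition err_split (R : realType) (mu sg a b r q : R) : R :=
  mu / (a + b + r) + sg * (b ^+ 2 + q + (b + r) ^+ 2) / (a + b + r) ^+ 2.

Section ErrSplit.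
Variables (R : realType) (mu sg : R).
Hypotheses (mu_gt0 : 0 < mu) (sg_gt0 : 0 < sg).
Implicit Types a b r q : R.

Lemma err_split_gt0 a b r q : 0 < a -> 0 < b -> 0 <= r -> 0 <= q ->
  0 < err_split mu sg a b r q.
Proof.
move=> a0 b0 r0 q0; have N0 : 0 < a + b + r by lra.
have B0 : 0 < b ^+ 2 + q + (b + r) ^+ 2.
  by rewrite ltr_wpDr ?sqr_ge0 // ltr_wpDr ?exprn_gt0.
by rewrite addr_gt0 ?divr_gt0 ?mulr_gt0 ?exprn_gt0.
Qed.

Lemma err_splitB a b r q : 0 < a + b + r ->
  err_split mu sg a b r q - err_split mu sg b a r q
  = 2 * sg * (b - a) / (a + b + r).
Proof.
move=> N0; rewrite /err_split [b + a]addrC; field.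
exact: lt0r_neq0.
Qed.

Lemma err_split_le a b r q : 0 < a -> a <= b -> 0 <= r ->
  err_split mu sg b a r q <= err_split mu sg a b r q.
Proof.
move=> a0 ab r0; have b0 := lt_le_trans a0 ab.
rewrite -subr_ge0 err_splitB; last by lra.
by rewrite divr_ge0 ?mulr_ge0 ?subr_ge0 ?(ltW sg_gt0) //; lra.
Qed.

Lemma err_split_lt a b r q : 0 < a -> a < b -> 0 <= r ->
  err_split mu sg b a r q < err_split mu sg a b r q.
Proof.
move=> a0 ab r0; have b0 := lt_trans a0 ab.
rewrite -subr_gt0 err_splitB; last by lra.
by rewrite divr_gt0 ?mulr_gt0 ?subr_gt0 //; lra.
Qed.

Lemma err_split_ratio_ge1 a b r q : 0 < a -> a <= b -> 0 <= r -> 0 <= q ->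
  1 <= err_split mu sg a b r q / err_split mu sg b a r q.
Proof.
move=> a0 ab r0 q0; have b0 := lt_le_trans a0 ab.
by rewrite ler_pdivlMr ?mul1r ?err_split_le ?err_split_gt0.
Qed.

Lemma err_split_num_gt0 a b r q : 0 < a + b + r -> 0 < b -> 0 <= q ->
  0 < mu * (a + b + r) + sg * (b ^+ 2 + q + (b + r) ^+ 2).
Proof.
move=> N0 b0 q0; rewrite addr_gt0 ?mulr_gt0 //.
by rewrite ltr_wpDr ?sqr_ge0 // ltr_wpDr ?exprn_gt0.
Qed.

Lemma err_split_ratioE a b r q : 0 < a -> 0 < b -> 0 <= r -> 0 <= q ->
  err_split mu sg a b r q / err_split mu sg b a r q
  = (mu * (a + b + r) + sg * (b ^+ 2 + q + (b + r) ^+ 2))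
    / (mu * (a + b + r) + sg * (a ^+ 2 + q + (a + r) ^+ 2)).
Proof.
move=> a0 b0 r0 q0; have N0 : 0 < a + b + r by lra.
have D0 : 0 < mu * (a + b + r) + sg * (a ^+ 2 + q + (a + r) ^+ 2).
  by rewrite (addrC a b) err_split_num_gt0 //; lra.
rewrite /err_split [b + a]addrC; field.
by rewrite !lt0r_neq0 ?D0.
Qed.

Lemma err_split_ratio_le a b r q : 0 < a -> a <= b -> 0 <= r -> 0 <= q ->
  err_split mu sg a b r q / err_split mu sg b a r q
  <= err_split mu sg a b 0 0 / err_split mu sg b a 0 0.
Proof.
move=> a0 ab r0 q0; have b0 := lt_le_trans a0 ab.
rewrite !err_split_ratioE // !addr0.
have den_gt0 r' q' : 0 <= r' -> 0 <= q' ->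
    0 < mu * (a + b + r') + sg * (a ^+ 2 + q' + (a + r') ^+ 2).
  by move=> r'0 q'0; rewrite (addrC a b) err_split_num_gt0 //; lra.
have := den_gt0 0 0 (lexx 0) (lexx 0); rewrite !addr0 => D1.
rewrite ler_pdivrMr ?den_gt0 // mulrAC ler_pdivlMr // -subr_ge0.
rewrite [X in 0 <= X](_ : _ = 2 * sg ^+ 2 * (b - a)
  * ((a + b) * (q + r ^+ 2) + 2 * a * b * r)); last by ring.
have ba : 0 <= b - a by rewrite subr_ge0.
have sg2 : 0 <= 2 * sg ^+ 2 by rewrite mulr_ge0 ?sqr_ge0.
have cross : 0 <= (a + b) * (q + r ^+ 2) + 2 * a * b * r.
  by rewrite addr_ge0 ?mulr_ge0 ?addr_ge0 ?sqr_ge0 ?(ltW a0) ?(ltW b0).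
by rewrite mulr_ge0 // mulr_ge0.
Qed.

End ErrSplit.

Section Coalition.
Variables (R : realType) (T : finType) (C : {set T}).

Lemma sum_neq_split (F : T -> R) j k : k \in C -> j != k ->
  \sum_(i in C | i != j) F i = F k + \sum_(i in C :\: [set j; k]) F i.
Proof.
move=> kC jk; rewrite (bigD1 k) /=; last by rewrite kC eq_sym.
congr (_ + _); apply: eq_bigl => i.
by rewrite !inE negb_or -andbA andbC.
Qed.

Lemma err_coalition_split (mu sg : R) (n : T -> R) j k :
  j \in C -> k \in C -> j != k ->
  err mu sg n C j = err_split mu sg (n j) (n k)
    (\sum_(i in C :\: [set j; k]) n i) (\sum_(i in C :\: [set j; k]) n i ^+ 2).
Proof.
move=> jC kC jk.
by rewrite /err /err_split (bigD1 j) //= !(sum_neq_split _ kC jk) addrA.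
Qed.

End Coalition.

Section TwoPlayers.
Variables (R : realType) (mu sg : R).
Hypotheses (mu_gt0 : 0 < mu) (sg_gt0 : 0 < sg).
Implicit Types a b c x : R.

Lemma err_pair_split a b :
  (err_s2 mu sg a b = err_split mu sg a b 0 0) *
  (err_l2 mu sg a b = err_split mu sg b a 0 0).
Proof.
have sum_out (F : bool -> R) j k : j != k ->
    \sum_(i in [set: bool] :\: [set j; k]) F i = 0.
  move=> jk; rewrite big_pred0 // => i.
  by rewrite !inE; case: i j k jk => [] [] [].
rewrite /err_s2 /err_l2 (@err_coalition_split _ _ _ _ _ _ false true) ?inE //.
by rewrite (@err_coalition_split _ _ _ _ _ _ true false) ?inE // !sum_out.
Qed.

Lemma ratio2_split a b :
  ratio2 mu sg a b = err_split mu sg a b 0 0 / err_split mu sg b a 0 0.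
Proof. by rewrite /ratio2 !err_pair_split. Qed.

(* [(c + x) ^+ 2] times the pair error, as polynomials in the size [x] of the
   other player, of the player of fixed size [c] resp. of the player of
   size [x]. *)
Definition scaled_err_fixed c : {poly R} :=
  mu%:P * ('X + c%:P) + (2 * sg)%:P * 'X^2.
Definition scaled_err_moving c : {poly R} :=
  mu%:P * ('X + c%:P) + (2 * sg * c ^+ 2)%:P.

Lemma scaled_err_fixed_gt0 c x : 0 < c -> 0 <= x ->
  0 < (scaled_err_fixed c).[x].
Proof.
move=> c0 x0; rewrite !hornerE.
by rewrite ltr_wpDr ?mulr_ge0 ?sqr_ge0 ?(ltW sg_gt0) // mulr_gt0 // ltr_wpDl.
Qed.

Lemma scaled_err_moving_gt0 c x : 0 < c -> 0 <= x ->
  0 < (scaled_err_moving c).[x].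
Proof.
move=> c0 x0; rewrite !hornerE.
rewrite ltr_wpDl ?mulr_ge0 ?(ltW mu_gt0) ?addr_ge0 ?(ltW c0) //.
by rewrite !mulr_gt0 ?exprn_gt0.
Qed.

Lemma scaled_err_wronskian c x :
  (scaled_err_fixed c)^`().[x] * (scaled_err_moving c).[x]
  - (scaled_err_fixed c).[x] * (scaled_err_moving c)^`().[x]
  = 2 * sg * mu * (c + x) ^+ 2 + 8 * sg ^+ 2 * c ^+ 2 * x.
Proof. by rewrite !poly.derivE !hornerE /=; ring. Qed.

Lemma scaled_err_wronskian_gt0 c x : 0 < c -> 0 <= x ->
  0 < (scaled_err_fixed c)^`().[x] * (scaled_err_moving c).[x]
      - (scaled_err_fixed c).[x] * (scaled_err_moving c)^`().[x].
Proof.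
move=> c0 x0; rewrite scaled_err_wronskian.
have cx0 : 0 < c + x by lra.
have pos : 0 < 2 * sg * mu * (c + x) ^+ 2.
  by rewrite mulr_gt0 ?exprn_gt0 // !mulr_gt0.
have nneg : 0 <= 8 * sg ^+ 2 * c ^+ 2 * x.
  by rewrite mulr_ge0 // mulr_ge0 ?sqr_ge0 // mulr_ge0 ?sqr_ge0.
lra.
Qed.

Lemma ratio2_horner_r a x : 0 < a -> 0 < x ->
  ratio2 mu sg a x = (scaled_err_fixed a).[x] / (scaled_err_moving a).[x].
Proof.
move=> a0 x0; rewrite ratio2_split err_split_ratioE ?lexx // !hornerE /=.
by congr (_ / _); ring.
Qed.

Lemma ratio2_horner_l x b : 0 < x -> 0 < b ->
  ratio2 mu sg x b = (scaled_err_moving b).[x] / (scaled_err_fixed b).[x].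
Proof.
move=> x0 b0; rewrite ratio2_split err_split_ratioE ?lexx // !hornerE /=.
by congr (_ / _); ring.
Qed.

Lemma ratio2_derive_r_ge0 a b : 0 < a -> 0 < b ->
  derivable (fun x => ratio2 mu sg a x) b 1
  /\ 0 <= derive1 (fun x => ratio2 mu sg a x) b.
Proof.
move=> a0 b0.
have near_b : \forall x \near b,
    (scaled_err_fixed a).[x] / (scaled_err_moving a).[x] = ratio2 mu sg a x.
  by near=> x; rewrite ratio2_horner_r //; near: x; exact: lt_nbhsr.
have den0 := lt0r_neq0 (scaled_err_moving_gt0 a0 (ltW b0)).
have [derivable_b ->] := near_horner_div_derive den0 near_b.
split=> //; rewrite divr_ge0 ?sqr_ge0 // ltW // scaled_err_wronskian_gt0 // ltW.
Unshelve. all: by end_near. Qed.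

Lemma ratio2_derive_l_le0 a b : 0 < a -> 0 < b ->
  derivable (fun x => ratio2 mu sg x b) a 1
  /\ derive1 (fun x => ratio2 mu sg x b) a <= 0.
Proof.
move=> a0 b0.
have near_a : \forall x \near a,
    (scaled_err_moving b).[x] / (scaled_err_fixed b).[x] = ratio2 mu sg x b.
  by near=> x; rewrite ratio2_horner_l //; near: x; exact: lt_nbhsr.
have den0 := lt0r_neq0 (scaled_err_fixed_gt0 b0 (ltW a0)).
have [derivable_a ->] := near_horner_div_derive den0 near_a.
split=> //; rewrite (mulrC (scaled_err_moving b)^`().[a]).
rewrite (mulrC (scaled_err_moving b).[a]) -opprB mulNr oppr_le0.
by rewrite divr_ge0 ?sqr_ge0 // ltW // scaled_err_wronskian_gt0 // ltW.
Unshelve. all: by end_near. Qed.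

Lemma ratio2_cvg_l0 b : 0 < b ->
  ratio2 mu sg x b @[x --> 0^'+] --> (mu / b + 2 * sg) / (mu / b).
Proof.
move=> b0.
have den0 := lt0r_neq0 (scaled_err_fixed_gt0 b0 (lexx 0)).
have cont0 : {for 0, continuous
    (fun x => (scaled_err_moving b).[x] / (scaled_err_fixed b).[x])}.
  apply/differentiable_continuous/derivable1_diffP.
  by have [] := is_derive_horner_div (scaled_err_moving b) den0.
have -> : (mu / b + 2 * sg) / (mu / b)
    = (scaled_err_moving b).[0] / (scaled_err_fixed b).[0].
  by rewrite !hornerE /=; field; rewrite !lt0r_neq0.
apply: cvg_trans (cvg_at_right_filter cont0); apply: near_eq_cvg.
by near=> x; rewrite ratio2_horner_l //; near: x; exact: nbhs_right_gt.
Unshelve. all: by end_near. Qed.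

End TwoPlayers.

Theorem lemma4p4 (R : realType) (T : finType) (mu sigma2 : R) (n : T -> R)
    (C : {set T}) (s l : T) :
  0 < mu -> 0 < sigma2 -> (forall i, 0 < n i) ->
  s \in C -> l \in C -> s != l -> n s <= n l ->
  (* (P1) *)
  (1 <= err mu sigma2 n C s / err mu sigma2 n C l
   /\ (n s < n l -> err mu sigma2 n C l < err mu sigma2 n C s))
  (* (P2) *)
  /\ err mu sigma2 n C s / err mu sigma2 n C l <= ratio2 mu sigma2 (n s) (n l)
  (* (P3) *)
  /\ (derivable (fun x => ratio2 mu sigma2 (n s) x) (n l) 1
      /\ 0 <= derive1 (fun x => ratio2 mu sigma2 (n s) x) (n l))
  (* (P4) *)
  /\ (derivable (fun x => ratio2 mu sigma2 x (n l)) (n s) 1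
      /\ derive1 (fun x => ratio2 mu sigma2 x (n l)) (n s) <= 0)
  (* (P5) *)
  /\ (ratio2 mu sigma2 x (n l) @[x --> 0^'+]
        --> (mu / n l + 2 * sigma2) / (mu / n l)).
Proof.
move=> mu_gt0 sg_gt0 n_gt0 sC lC s_neq_l ns_le_nl.
set r := \sum_(i in C :\: [set s; l]) n i.
set q := \sum_(i in C :\: [set s; l]) n i ^+ 2.
have r0 : 0 <= r by apply: sumr_ge0 => i _; apply: ltW.
have q0 : 0 <= q by apply: sumr_ge0 => i _; apply: sqr_ge0.
have err_s : err mu sigma2 n C s = err_split mu sigma2 (n s) (n l) r q.
  exact: err_coalition_split.
have err_l : err mu sigma2 n C l = err_split mu sigma2 (n l) (n s) r q.
  by rewrite (err_coalition_split _ _ _ lC sC) 1?eq_sym // finset.setUC.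
have P3 := ratio2_derive_r_ge0 mu_gt0 sg_gt0 (n_gt0 s) (n_gt0 l).
have P4 := ratio2_derive_l_le0 mu_gt0 sg_gt0 (n_gt0 s) (n_gt0 l).
have P5 := ratio2_cvg_l0 mu_gt0 sg_gt0 (n_gt0 l).
rewrite err_s err_l ratio2_split; split; first split.
- exact: err_split_ratio_ge1.
- by move=> ns_lt_nl; apply: err_split_lt.
by split; [exact: err_split_ratio_le | split].
Qed.
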